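(* Let $\boldsymbol{X}\in\mathbb{R}^{n\times d}$ have rows $\boldsymbol{x}_i$ with $\lVert\boldsymbol{x}_i\rVert_2\le\gamma$ for all $i$, let $\boldsymbol{W}_Q,\boldsymbol{W}_K\in\mathbb{R}^{d\times d_k}$, $\tau>0$, and define $\boldsymbol{P}_{ij}=-\lVert\boldsymbol{x}_i^T\boldsymbol{W}_Q-\boldsymbol{x}_j^T\boldsymbol{W}_K\rVert_2^2/\tau$ and $\boldsymbol{A}=\mathrm{softmax}(\boldsymbol{P})$. Then $\alpha:=\max_{i,j}\lvert\boldsymbol{P}_{ij}\rvert\le(\lVert\boldsymbol{W}_K\rVert_2+\lVert\boldsymbol{W}_Q\rVert_2)^2\gamma^2/\tau$, and consequently for every $\boldsymbol{W}_V\in\mathbb{R}^{d\times d}$, $$\lVert\mathrm{HC}[\boldsymbol{A}\boldsymbol{X}\boldsymbol{W}_V]\rVert_F\le\sqrt{\frac{ne^{2\alpha}}{e^{2\alpha}+n-1}}\,\lVert\boldsymbol{W}_V\rVert_2\lVert\mathrm{HC}[\boldsymbol{X}]\rVert_F .$$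
   Context: $\mathrm{softmax}$ is applied row-wise: $\mathrm{softmax}(\boldsymbol{P})_{ij}=e^{\boldsymbol{P}_{ij}}/\sum_t e^{\boldsymbol{P}_{it}}$. $\mathrm{HC}[\boldsymbol{X}]=(\boldsymbol{I}-\frac1n\boldsymbol{1}\boldsymbol{1}^T)\boldsymbol{X}$ with $\boldsymbol{1}$ the all-ones vector. $\lVert\cdot\rVert_F$ Frobenius norm, $\lVert\cdot\rVert_2$ spectral norm. *)

From HB Require Import structures.
From mathcomp Require Import all_boot all_order all_algebra.
From mathcomp Require Import classical_sets reals.
From mathcomp.analysis Require Import sequences exp.
Set Implicit Arguments. Unset Strict Implicit. Unset Printing Implicit Defensive.
Import Order.TTheory GRing.Theory Num.Theory.
Local Open Scope classical_set_scope.
Local Open Scope ring_scope.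

Definition vnorm (R : realType) (m : nat) (v : 'rV[R]_m) : R :=
  Num.sqrt (\sum_(j < m) v 0 j ^+ 2).

Definition frob (R : realType) (m n : nat) (A : 'M[R]_(m, n)) : R :=
  Num.sqrt (\sum_(i < m) \sum_(j < n) A i j ^+ 2).

Definition specnorm (R : realType) (m n : nat) (W : 'M[R]_(m, n)) : R :=
  sup [set vnorm (u *m W) | u in [set u : 'rV[R]_m | vnorm u <= 1]].

Definition softmax (R : realType) (m n : nat) (P : 'M[R]_(m, n)) : 'M[R]_(m, n) :=
  \matrix_(i, j) (expR (P i j) / \sum_(t < n) expR (P i t)).

Definition HC (R : realType) (n p : nat) (X : 'M[R]_(n, p)) : 'M[R]_(n, p) :=
  (1%:M - (n%:R)^-1 *: const_mx 1) *m X.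

Definition L2attn_logits (R : realType) (n d dk : nat) (X : 'M[R]_(n, d))
  (WQ WK : 'M[R]_(d, dk)) (tau : R) : 'M[R]_(n, n) :=
  \matrix_(i, j) (- (vnorm (row i X *m WQ - row j X *m WK)) ^+ 2 / tau).

(* max_{i,j} |P_ij| (0 for an empty matrix). *)
Definition maxabs (R : realType) (m n : nat) (P : 'M[R]_(m, n)) : R :=
  \big[Num.max/0]_(i < m) \big[Num.max/0]_(j < n) `|P i j|.

From HB Require Import structures.
From mathcomp Require Import all_boot all_order all_algebra.
From mathcomp Require Import classical_sets reals.
From mathcomp.analysis Require Import sequences exp.
From mathcomp Require Import ring lra.
Set Implicit Arguments. Unset Strict Implicit. Unset Printing Implicit Defensive.
Import Order.TTheory GRing.Theory Num.Theory.
Local Open Scope ring_scope.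

(* The logit bound is the triangle inequality
   |x_i W_Q - x_j W_K| <= (|W_Q|_2 + |W_K|_2) gamma.
   For the second claim, the logits of a row lie in an interval of length
   2 alpha, so every softmax weight is at most
   e^(2 alpha) / (e^(2 alpha) + n - 1) and every column of A sums to at most
   c = n e^(2 alpha) / (e^(2 alpha) + n - 1).
   As A is row-stochastic, A X W_V differs from A HC[X] W_V by a matrix with
   constant columns, and centring a matrix can only decrease its Frobenius norm
   (the mean minimises the squared deviations of a column).  Finally
   |A V|_F^2 <= c |V|_F^2, by Jensen's inequality in each row of A and the
   column bound. *)

Section SquareSums.
Variable R : realFieldType.

Lemma sumr_sqr_ge0 (m : nat) (a : 'I_m -> R) : 0 <= \sum_i a i ^+ 2.
Proof. by apply: sumr_ge0 => i _; exact: sqr_ge0. Qed.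

Lemma sqr_sum_mul_le (m : nat) (a b : 'I_m -> R) :
  (\sum_i a i * b i) ^+ 2 <= (\sum_i a i ^+ 2) * (\sum_i b i ^+ 2).
Proof.
have lagrange : \sum_i \sum_j (a i * b j - a j * b i) ^+ 2 =
    2 * ((\sum_i a i ^+ 2) * (\sum_j b j ^+ 2) - (\sum_i a i * b i) ^+ 2).
  rewrite [in RHS]expr2 !big_distrlr /= mulrBr mulr2n mulrDl !mul1r.
  rewrite [X in _ = _ + X - _]exchange_big /=.
  rewrite mulr_sumr -big_split /= -sumrB; apply: eq_bigr => i _.
  by rewrite mulr_sumr -big_split /= -sumrB; apply: eq_bigr => j _; ring.
have : 0 <= \sum_i \sum_j (a i * b j - a j * b i) ^+ 2.
  by apply: sumr_ge0 => i _; exact: sumr_sqr_ge0.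
by rewrite lagrange pmulr_rge0 // subr_ge0.
Qed.

Lemma sum_sqr_dev_mean_le (n : nat) (z : 'I_n -> R) (c : R) :
  \sum_i (z i - n%:R^-1 * \sum_l z l) ^+ 2 <= \sum_i (z i - c) ^+ 2.
Proof.
case: n z => [|n] z; first by rewrite !big_ord0.
set mu := _ * _.
have dev_sum0 : \sum_i (z i - mu) = 0.
  rewrite sumrB sumr_const card_ord /mu -mulrnAr -(mulr_natl (\sum_l z l)).
  by rewrite mulKf ?subrr ?pnatr_eq0.
have -> : \sum_i (z i - c) ^+ 2 = \sum_i (z i - mu) ^+ 2 +
    2 * (mu - c) * \sum_i (z i - mu) + \sum_(i < n.+1) (mu - c) ^+ 2.
  by rewrite mulr_sumr -!big_split /=; apply: eq_bigr => i _; ring.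
by rewrite dev_sum0 mulr0 addr0 lerDl sumr_sqr_ge0.
Qed.

End SquareSums.

Lemma sqr_sum_weighted_le (R : rcfType) (m : nat) (a y : 'I_m -> R) :
  (forall i, 0 <= a i) ->
  (\sum_i a i * y i) ^+ 2 <= (\sum_i a i) * (\sum_i a i * y i ^+ 2).
Proof.
move=> a_ge0; have := sqr_sum_mul_le (fun i => Num.sqrt (a i))
                                     (fun i => Num.sqrt (a i) * y i).
have sqrt_a i : Num.sqrt (a i) ^+ 2 = a i by rewrite sqr_sqrtr.
congr (_ <= _ * _); [congr (_ ^+ 2)|..]; apply: eq_bigr => i _.
- by rewrite mulrA -expr2 sqrt_a.
- by rewrite sqrt_a.
- by rewrite exprMn sqrt_a.
Qed.

Section Norms.
Variable R : realType.
Implicit Types (m n p : nat).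

Lemma vnorm_ge0 m (v : 'rV[R]_m) : 0 <= vnorm v.
Proof. exact: sqrtr_ge0. Qed.

Lemma vnorm_sqr m (v : 'rV[R]_m) : vnorm v ^+ 2 = \sum_j v 0 j ^+ 2.
Proof. by rewrite sqr_sqrtr // sumr_sqr_ge0. Qed.

Lemma vnorm0 m : vnorm (0 : 'rV[R]_m) = 0.
Proof. by rewrite /vnorm big1 ?sqrtr0 // => j _; rewrite mxE expr0n. Qed.

Lemma vnormZ m (c : R) (v : 'rV[R]_m) : vnorm (c *: v) = `|c| * vnorm v.
Proof.
rewrite /vnorm -sqrtr_sqr -sqrtrM ?sqr_ge0 // mulr_sumr.
by congr Num.sqrt; apply: eq_bigr => j _; rewrite mxE exprMn.
Qed.

Lemma norm_sum_mul_le_vnorm m (u v : 'rV[R]_m) :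
  `|\sum_j u 0 j * v 0 j| <= vnorm u * vnorm v.
Proof.
rewrite -sqrtrM ?sumr_sqr_ge0 // -sqrtr_sqr.
by rewrite ler_sqrt ?mulr_ge0 ?sumr_sqr_ge0 // sqr_sum_mul_le.
Qed.

Lemma vnormB_le m (u v : 'rV[R]_m) : vnorm (u - v) <= vnorm u + vnorm v.
Proof.
rewrite -ler_sqr ?nnegrE ?addr_ge0 ?vnorm_ge0 // sqrrD !vnorm_sqr.
have -> : \sum_j (u - v) 0 j ^+ 2 =
    \sum_j u 0 j ^+ 2 + \sum_j v 0 j ^+ 2 - 2 * \sum_j u 0 j * v 0 j.
  rewrite mulr_sumr -big_split -sumrB /=.
  by apply: eq_bigr => j _; rewrite !mxE; ring.
have /lerNnormlW := norm_sum_mul_le_vnorm u v; lra.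
Qed.

Lemma frob_ge0 m n (M : 'M[R]_(m, n)) : 0 <= frob M.
Proof. exact: sqrtr_ge0. Qed.

Lemma frob_rows m n (M : 'M[R]_(m, n)) :
  frob M = Num.sqrt (\sum_i vnorm (row i M) ^+ 2).
Proof.
congr Num.sqrt; apply: eq_bigr => i _.
by rewrite vnorm_sqr; apply: eq_bigr => j _; rewrite mxE.
Qed.

Lemma vnorm_mulmx_le_frob m n (u : 'rV[R]_m) (W : 'M[R]_(m, n)) :
  vnorm (u *m W) <= vnorm u * frob W.
Proof.
have W_ge0 : 0 <= \sum_i \sum_j W i j ^+ 2.
  by apply: sumr_ge0 => i _; exact: sumr_sqr_ge0.
rewrite -sqrtrM ?sumr_sqr_ge0 // ler_sqrt ?mulr_ge0 ?sumr_sqr_ge0 //.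
rewrite exchange_big mulr_sumr; apply: ler_sum => j _ /=.
by rewrite mxE; exact: (sqr_sum_mul_le (fun i => u 0 i) (fun i => W i j)).
Qed.

Local Open Scope classical_set_scope.

Lemma specnorm_has_sup m n (W : 'M[R]_(m, n)) :
  has_sup [set vnorm (u *m W) | u in [set u : 'rV[R]_m | vnorm u <= 1]].
Proof.
split; first by exists 0, 0; rewrite /= ?vnorm0 ?mul0mx ?vnorm0.
exists (frob W) => _ [u /= u_le1 <-].
apply: le_trans (vnorm_mulmx_le_frob u W) _.
by rewrite ler_piMl ?frob_ge0.
Qed.

Lemma specnorm_ge0 m n (W : 'M[R]_(m, n)) : 0 <= specnorm W.
Proof.
have := sup_upper_bound (specnorm_has_sup W); apply.
by exists 0; rewrite /= ?mul0mx vnorm0.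
Qed.

Lemma vnorm_mulmx_le m n (u : 'rV[R]_m) (W : 'M[R]_(m, n)) :
  vnorm (u *m W) <= vnorm u * specnorm W.
Proof.
have [u0|u_gt0] := eqVneq (vnorm u) 0.
  by apply: le_trans (vnorm_mulmx_le_frob u W) _; rewrite u0 !mul0r.
have {u_gt0}u_gt0 : 0 < vnorm u by rewrite lt_def u_gt0 vnorm_ge0.
have unit_u : vnorm ((vnorm u)^-1 *: u) = 1.
  by rewrite vnormZ ger0_norm ?invr_ge0 ?vnorm_ge0 // mulVf ?gt_eqF.
rewrite mulrC -ler_pdivrMr //.
have := sup_upper_bound (specnorm_has_sup W); apply.
exists ((vnorm u)^-1 *: u); first by rewrite /= unit_u.
by rewrite -scalemxAl vnormZ ger0_norm ?invr_ge0 ?vnorm_ge0 // mulrC.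
Qed.

Lemma frob_mulmx_le m n p (Y : 'M[R]_(m, n)) (W : 'M[R]_(n, p)) :
  frob (Y *m W) <= frob Y * specnorm W.
Proof.
have W_ge0 := specnorm_ge0 W.
rewrite !frob_rows -[specnorm W]ger0_norm // -sqrtr_sqr.
rewrite -sqrtrM ?sumr_sqr_ge0 // ler_sqrt ?mulr_ge0 ?sqr_ge0 ?sumr_sqr_ge0 //.
rewrite mulr_suml; apply: ler_sum => i _; rewrite row_mul -exprMn.
by rewrite ler_sqr ?nnegrE ?mulr_ge0 ?vnorm_ge0 // vnorm_mulmx_le.
Qed.

End Norms.

Section Centering.
Variable R : realType.
Implicit Types (m n p : nat).

Lemma frob_mulmx_stochastic_le m n p (A : 'M[R]_(m, n)) (V : 'M[R]_(n, p))
    (c : R) :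
  0 <= c -> (forall i j, 0 <= A i j) -> (forall i, \sum_j A i j = 1) ->
  (forall j, \sum_i A i j <= c) -> frob (A *m V) <= Num.sqrt c * frob V.
Proof.
move=> c_ge0 A_ge0 A_row1 A_col_le.
have V_ge0 : 0 <= \sum_j \sum_k V j k ^+ 2.
  by apply: sumr_ge0 => j _; exact: sumr_sqr_ge0.
rewrite /frob -sqrtrM // ler_sqrt ?mulr_ge0 //.
apply: le_trans (_ : \sum_i \sum_k \sum_j A i j * V j k ^+ 2 <= _).
  apply: ler_sum => i _; apply: ler_sum => k _; rewrite mxE.
  by have := sqr_sum_weighted_le (fun j => V j k) (A_ge0 i); rewrite A_row1 mul1r.
rewrite exchange_big /=.
rewrite [in leRHS](exchange_big _ _ _ _ _ (fun j k => V j k ^+ 2)) /=.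
rewrite mulr_sumr; apply: ler_sum => k _.
rewrite exchange_big /= mulr_sumr; apply: ler_sum => j _.
by rewrite -mulr_suml ler_wpM2r ?sqr_ge0.
Qed.

Lemma mulmx_const1 m n p (A : 'M[R]_(m, n)) : (forall i, \sum_j A i j = 1) ->
  A *m const_mx 1 = const_mx 1 :> 'M_(m, p).
Proof.
move=> A_row1; apply/matrixP => i k; rewrite !mxE -[RHS](A_row1 i).
by apply: eq_bigr => j _; rewrite mxE mulr1.
Qed.

Definition colmean n p (Y : 'M[R]_(n, p)) : 'rV[R]_p :=
  n%:R^-1 *: (const_mx 1 *m Y).

Lemma HC_colmean n p (Y : 'M[R]_(n, p)) : HC Y = Y - const_mx 1 *m colmean Y.
Proof.
rewrite /HC /colmean mulmxBl mul1mx -scalemxAl -scalemxAr mulmxA mulmx_const1 //.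
by move=> i; rewrite big_ord1 mxE.
Qed.

Lemma mulmx_HC m n p (A : 'M[R]_(m, n)) (Y : 'M[R]_(n, p)) :
  (forall i, \sum_j A i j = 1) -> A *m HC Y = A *m Y - const_mx 1 *m colmean Y.
Proof. by move=> A_row1; rewrite HC_colmean mulmxBr mulmxA mulmx_const1. Qed.

Lemma frob_HC_le n p (M : 'M[R]_(n, p)) (c : 'rV[R]_p) :
  frob (HC M) <= frob (M - const_mx 1 *m c).
Proof.
rewrite /frob ler_sqrt; last by apply: sumr_ge0 => i _; exact: sumr_sqr_ge0.
rewrite exchange_big [leRHS]exchange_big /=; apply: ler_sum => k _.
have := sum_sqr_dev_mean_le (fun i => M i k) (c 0 k).
congr (_ <= _); apply: eq_bigr => i _.
- rewrite HC_colmean !mxE big_ord1 !mxE mul1r.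
  by congr ((_ - _ * _) ^+ 2); apply: eq_bigr => l _; rewrite mxE mul1r.
- by rewrite !mxE big_ord1 !mxE mul1r.
Qed.

End Centering.

Section Softmax.
Variable R : realType.
Implicit Types (m n : nat).

Lemma sumr_expR_gt0 n (f : 'I_n -> R) : (0 < n)%N -> 0 < \sum_t expR (f t).
Proof.
move=> n_gt0; rewrite (bigD1 (Ordinal n_gt0)) //= ltr_wpDr ?expR_gt0 //.
by apply: sumr_ge0 => t _; exact: expR_ge0.
Qed.

Lemma softmax_ge0 m n (P : 'M[R]_(m, n)) i j : 0 <= softmax P i j.
Proof.
rewrite mxE divr_ge0 ?expR_ge0 // ltW // sumr_expR_gt0 //.
exact: leq_ltn_trans (ltn_ord j).
Qed.

Lemma sum_softmax_row m n (P : 'M[R]_(m, n)) i :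
  (0 < n)%N -> \sum_j softmax P i j = 1.
Proof.
move=> n_gt0; under eq_bigr do rewrite mxE.
by rewrite -mulr_suml mulfV // gt_eqF // sumr_expR_gt0.
Qed.

Lemma softmax_le m n (P : 'M[R]_(m, n)) (a : R) i j :
  (forall t, `|P i t| <= a) ->
  softmax P i j <= expR (2 * a) / (expR (2 * a) + n%:R - 1).
Proof.
move=> P_le; rewrite mxE.
have n_ge1 : 1 <= n%:R :> R by rewrite ler1n (leq_ltn_trans _ (ltn_ord j)).
set x := expR (P i j); set e := expR (2 * a).
have S_def : \sum_t expR (P i t) = x + \sum_(t | t != j) expR (P i t).
  by rewrite (bigD1 j).
have x_le t : x <= e * expR (P i t).
  rewrite /e -expRD ler_expR.
  by have := P_le t; have := P_le j; rewrite !ler_norml; lra.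
have others : \sum_(t | t != j) x <= e * \sum_(t | t != j) expR (P i t).
  by rewrite mulr_sumr; apply: ler_sum => t _; exact: x_le.
have : \sum_(t < n) x = x + \sum_(t | t != j) x by rewrite (bigD1 j).
rewrite sumr_const card_ord => nx_def.
have x_gt0 : 0 < x := expR_gt0 _.
have e_gt0 : 0 < e := expR_gt0 _.
have T_ge0 : 0 <= \sum_(t | t != j) expR (P i t).
  by apply: sumr_ge0 => t _; exact: expR_ge0.
rewrite S_def ler_pdivrMr ?ltr_wpDr // mulrAC ler_pdivlMr; last lra.
move: nx_def others; rewrite -mulr_natr; lra.
Qed.

Lemma sum_softmax_col_le m n (P : 'M[R]_(m, n)) (a : R) j :
  (forall i t, `|P i t| <= a) ->
  \sum_i softmax P i j <= m%:R * (expR (2 * a) / (expR (2 * a) + n%:R - 1)).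
Proof.
move=> P_le; apply: le_trans (ler_sum _ (fun i _ => softmax_le j (P_le i))) _.
by rewrite sumr_const card_ord [leRHS]mulr_natl.
Qed.

Lemma le_maxabs m n (P : 'M[R]_(m, n)) i j : `|P i j| <= maxabs P.
Proof.
apply: le_trans (le_bigmax _ (fun i => \big[Num.max/0]_(j < n) `|P i j|) i).
exact: le_bigmax.
Qed.

Lemma maxabs_ge0 m n (P : 'M[R]_(m, n)) : 0 <= maxabs P.
Proof. exact: bigmax_ge_id. Qed.

Lemma maxabs_le m n (P : 'M[R]_(m, n)) (b : R) :
  0 <= b -> (forall i j, `|P i j| <= b) -> maxabs P <= b.
Proof. by move=> b_ge0 P_le; do 2![apply: bigmax_le => // ? _]. Qed.

Lemma L2attn_logits_le n d dk (X : 'M[R]_(n, d)) (gamma : R)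
    (WQ WK : 'M[R]_(d, dk)) (tau : R) :
  (forall i, vnorm (row i X) <= gamma) -> 0 < tau -> forall i j,
  `|L2attn_logits X WQ WK tau i j| <=
    (specnorm WK + specnorm WQ) ^+ 2 * gamma ^+ 2 / tau.
Proof.
move=> X_le tau_gt0 i j.
have gamma_ge0 : 0 <= gamma := le_trans (vnorm_ge0 _) (X_le i).
have [WQ_ge0 WK_ge0] := (specnorm_ge0 WQ, specnorm_ge0 WK).
rewrite mxE normrM normrN normrX ger0_norm ?vnorm_ge0 // normfV gtr0_norm //.
rewrite ler_pM2r ?invr_gt0 // -exprMn.
rewrite ler_sqr ?nnegrE ?vnorm_ge0 ?mulr_ge0 ?addr_ge0 //.
apply: le_trans (vnormB_le _ _) _; rewrite mulrDl addrC.
by apply: lerD; apply: le_trans (vnorm_mulmx_le _ _) _; rewrite mulrC ler_wpM2l.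
Qed.

End Softmax.

Theorem mainTheorem9 (R : realType) (n d dk : nat) (X : 'M[R]_(n, d))
  (gamma : R) (WQ WK : 'M[R]_(d, dk)) (tau : R)
  (hX : forall i : 'I_n, vnorm (row i X) <= gamma) (htau : 0 < tau) :
  let P := L2attn_logits X WQ WK tau in
  let A := softmax P in
  let alpha := maxabs P in
  alpha <= (specnorm WK + specnorm WQ) ^+ 2 * gamma ^+ 2 / tau /\
  forall WV : 'M[R]_(d, d),
    frob (HC (A *m X *m WV)) <=
      Num.sqrt (n%:R * expR (2 * alpha) / (expR (2 * alpha) + n%:R - 1))
      * specnorm WV * frob (HC X).
Proof.
move=> P A alpha; split.
  apply: maxabs_le; last exact: L2attn_logits_le.
  by apply: divr_ge0; [rewrite mulr_ge0 ?sqr_ge0 | exact: ltW].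
move=> WV; set c := _ / _.
have c_ge0 : 0 <= c.
  have e_ge1 : 1 <= expR (2 * alpha).
    apply: le_trans (expR_ge1Dx _); rewrite lerDl mulr_ge0 //; exact: maxabs_ge0.
  by apply: divr_ge0; [rewrite mulr_ge0 ?expR_ge0 | have := ler0n R n; lra].
have A_row1 i : \sum_j A i j = 1.
  by apply: sum_softmax_row; exact: leq_ltn_trans (ltn_ord i).
have A_col_le j : \sum_i A i j <= c.
  by rewrite /c -mulrA; apply: sum_softmax_col_le => i t; exact: le_maxabs.
have centered :
    A *m X *m WV - const_mx 1 *m colmean (X *m WV) = A *m (HC X *m WV).
  by rewrite -[HC X *m WV]mulmxA -/(HC (X *m WV)) mulmx_HC // mulmxA.
apply: le_trans (frob_HC_le _ (colmean (X *m WV))) _; rewrite centered.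
have A_ge0 := @softmax_ge0 _ _ _ P.
apply: le_trans (frob_mulmx_stochastic_le _ c_ge0 A_ge0 A_row1 A_col_le) _.
by rewrite -mulrA ler_wpM2l ?sqrtr_ge0 // mulrC frob_mulmx_le.
Qed.
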